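(* Fix a prompt $q$, constants $\beta>0$, $\varepsilon>0$, and assume $1-\rho^+(q)-\rho^-(q)>0$ and $0<p_{\mathrm{ref}}(q)<1$. Let $(\pi_k)_{k\ge0}$ be a sequence of policies such that, for each $k\ge1$, $\pi_k(\cdot\mid q)$ is the maximizer over all distributions $\pi(\cdot\mid q)$ on $\mathcal O$ of \[ \frac{(1-\rho^+(q)-\rho^-(q))\,\bigl(p_\pi(q)-p_{\pi_{k-1}}(q)\bigr)}{\sqrt{\mu_{\pi_{k-1}}(q)(1-\mu_{\pi_{k-1}}(q))+\varepsilon}}-\beta\,\mathrm{KL}\bigl(\pi(\cdot\mid q)\,\|\,\pi_{\mathrm{ref}}(\cdot\mid q)\bigr). \] Then for all $k\ge1$, $p_{\pi_k}(q)=\tilde h_{\varepsilon,\mathrm{ref}}(p_{\pi_{k-1}}(q))$, where \[ \tilde h_{\varepsilon,\mathrm{ref}}(p)=\frac{1}{1+\frac{1-p_{\mathrm{ref}}(q)}{p_{\mathrm{ref}}(q)}\exp\!\Bigl(-\frac{1-\rho^+(q)-\rho^-(q)}{\beta\sqrt{F(p)(1-F(p))+\varepsilon}}\Bigr)},\qquad F(p)=\rho^+(q)+(1-\rho^+(q)-\rho^-(q))\,p . \] Moreover, if in addition $\rho^+(q)+\rho^-(q)>0$, then $\tilde h_{\varepsilon,\mathrm{ref}}(p)<h_{\varepsilon,\mathrm{ref}}(p)$ for all $p\in[0,1]$, where \[ h_{\varepsilon,\mathrm{ref}}(p)=\frac{1}{1+\frac{1-p_{\mathrm{ref}}(q)}{p_{\mathrm{ref}}(q)}\exp\!\Bigl(-\frac{1}{\beta\sqrt{p(1-p)+\varepsilon}}\Bigr)}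 \] is the corresponding noiseless map; consequently the largest fixed point of $\tilde h_{\varepsilon,\mathrm{ref}}$ in $[0,1]$ is strictly smaller than the largest fixed point of $h_{\varepsilon,\mathrm{ref}}$ in $[0,1]$.
   Context: Setting: $\mathcal O$ is a countable set of responses; $r^*:\mathcal Q\times\mathcal O\to\{0,1\}$ is the true binary reward; a policy gives a distribution $\pi(\cdot\mid q)$ on $\mathcal O$; $p_\pi(q)=\mathbb E_{o\sim\pi(\cdot\mid q)}[r^*(q,o)]$. $\pi_{\mathrm{ref}}$ is a fixed reference policy and $p_{\mathrm{ref}}(q)=p_{\pi_{\mathrm{ref}}}(q)$. $\mathrm{KL}$ is the Kullback–Leibler divergence. Flip rates $\rho^+(q),\rho^-(q)\in[0,1]$ are the probabilities that a true reward $0$ is observed as $1$, respectively a true reward $1$ is observed as $0$. $\mu_{\pi}(q)=\rho^+(q)+(1-\rho^+(q)-\rho^-(q))\,p_{\pi}(q)$ is the mean observed (noisy) reward under $\pi$. *)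

From HB Require Import structures.
From mathcomp Require Import all_boot all_order all_algebra.
From mathcomp Require Import all_classical all_reals.
From mathcomp Require Import ereal sequences esum exp.
Set Implicit Arguments. Unset Strict Implicit. Unset Printing Implicit Defensive.
Import Order.TTheory GRing.Theory Num.Theory.
Local Open Scope classical_set_scope.
Local Open Scope ring_scope.

Section Defs.
Context {R : realType} {O : countType}.

Definition is_dist (pi : O -> R) : Prop :=
  (forall o, 0 <= pi o) /\ \esum_(o in [set: O]) (pi o)%:E = 1%E.

(* p_pi(q) = E_{o ~ pi(.|q)} [ r*(q,o) ], with r := r*(q, .) *)
Definition succ_prob (r : O -> bool) (pi : O -> R) : R :=
  fine (\esum_(o in [set: O]) ((r o)%:R * pi o)%:E).

Definition kl_term (a b : R) : \bar R :=
  if a == 0 then 0%E else if b == 0 then +oo%E else (a * ln (a / b))%:E.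

Definition KL (pi piref : O -> R) : \bar R :=
  (\esum_(o in [set: O]) maxe (kl_term (pi o) (piref o)) 0
   - \esum_(o in [set: O]) maxe (- kl_term (pi o) (piref o)) 0)%E.

(* mean of the observed noisy reward: rho+ + (1 - rho+ - rho-) p *)
Definition noisy_mean (rp rm p : R) : R := rp + (1 - rp - rm) * p.

Definition objective (rp rm beta eps : R) (r : O -> bool)
    (piref piprev pi : O -> R) : \bar R :=
  let mu := noisy_mean rp rm (succ_prob r piprev) in
  (((1 - rp - rm) * (succ_prob r pi - succ_prob r piprev)
      / Num.sqrt (mu * (1 - mu) + eps))%:E
   - beta%:E * KL pi piref)%E.

Definition is_maximizer (rp rm beta eps : R) (r : O -> bool)
    (piref piprev pik : O -> R) : Prop :=
  is_dist pik /\
  forall pi, is_dist pi ->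
    (objective rp rm beta eps r piref piprev pi
     <= objective rp rm beta eps r piref piprev pik)%E.

End Defs.

Definition htilde {R : realType} (pref rp rm beta eps p : R) : R :=
  let F := noisy_mean rp rm p in
  1 / (1 + (1 - pref) / pref
             * expR (- ((1 - rp - rm) / (beta * Num.sqrt (F * (1 - F) + eps))))).

Definition hmap {R : realType} (pref beta eps p : R) : R :=
  1 / (1 + (1 - pref) / pref
             * expR (- (1 / (beta * Num.sqrt (p * (1 - p) + eps))))).

Definition largest_fixed_point {R : realType} (f : R -> R) (a : R) : Prop :=
  [/\ 0 <= a <= 1, f a = a & forall x, 0 <= x <= 1 -> f x = x -> x <= a].

(* The maximizer is an exponential tilt of [piref].  By the tangent-line bound
   a ln(a/b) >= (1 + ln l) a - l b, with equality iff a = l b, the objective is a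
   constant minus beta times a nonnegative gap that vanishes exactly at
   pi = w * piref, where w = e^(c/beta)/Z on correct responses and 1/Z on wrong
   ones (c the reward slope, Z the normalizer); its success probability
   P e^(c/beta)/Z is the logistic expression [htilde].
   Noise multiplies the slope by 1 - rp - rm < 1 while
   F (1 - F) >= (1 - rp - rm)^2 p (1 - p), so the logistic exponent decreases and
   [htilde] < [hmap] on [0, 1].  Then [hmap] lies strictly above the diagonal at
   the largest fixed point of [htilde], and the intermediate value theorem gives a
   fixed point of [hmap] further right. *)

From HB Require Import structures.
From mathcomp Require Import all_boot all_order all_algebra.
From mathcomp Require Import all_classical all_reals all_analysis.
From mathcomp Require Import ring lra.
Import Order.TTheory GRing.Theory Num.Theory.
Import numFieldNormedType.Exports.
Local Open Scope classical_set_scope.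
Local Open Scope ring_scope.

Section ExtendedSums.
Context {R : realType} {T : choiceType}.
Local Open Scope ereal_scope.

Lemma ge0_esumZl (k : R) (a : T -> \bar R) : (0 <= k)%R -> (forall t, 0 <= a t) ->
  \esum_(t in [set: T]) (k%:E * a t) = k%:E * \esum_(t in [set: T]) a t.
Proof.
move=> k0 a0; rewrite /esum -ereal_supZl//; last first.
  by apply/set0P; exists 0, set0; [exact: fsets_set0|rewrite fsbig_set0].
rewrite image_comp; congr ereal_sup; apply: eq_imagel => A [finA _] /=.
by rewrite !fsbig_finite// ge0_sume_distrr.
Qed.

Lemma ge0_term_le_esum (a : T -> \bar R) (t : T) : (forall u, 0 <= a u) ->
  a t <= \esum_(u in [set: T]) a u.
Proof.
move=> a0; apply: esum_ge; exists [set t]; last by rewrite fsbig_set1.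
by split; [exact: finite_set1|].
Qed.

End ExtendedSums.

Section Distributions.
Context {R : realType} {O : countType}.
Variables (r : O -> bool) (pi : O -> R).
Hypothesis dist_pi : is_dist pi.

Let indicator_mul_ge0 (b : bool) (o : O) : (0 <= (b%:R * pi o)%:E)%E.
Proof. by rewrite lee_fin mulr_ge0 //; case: dist_pi. Qed.

Lemma succ_prob_split :
  let s := succ_prob r pi in
  [/\ (0 <= s <= 1)%R,
      \esum_(o in [set: O]) ((r o)%:R * pi o)%:E = s%:E &
      \esum_(o in [set: O]) ((~~ r o)%:R * pi o)%:E = (1 - s)%:E].
Proof.
move=> s; have [_ pi1] := dist_pi.
set X := esum _ _; set Y := esum _ _.
have XY1 : (X + Y = 1)%E.
  rewrite -pi1 -esumD; last 2 first.
  - by move=> o _; exact: indicator_mul_ge0.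
  - by move=> o _; exact: indicator_mul_ge0.
  by apply: eq_esum => o _; case: (r o); rewrite -EFinD ?mul1r ?mul0r ?addr0 ?add0r.
have X0 : (0 <= X)%E by apply: esum_ge0 => o _; exact: indicator_mul_ge0.
have Y0 : (0 <= Y)%E by apply: esum_ge0 => o _; exact: indicator_mul_ge0.
have Yfin : Y \is a fin_num.
  rewrite ge0_fin_numE // (@le_lt_trans _ _ 1%E) ?ltry //.
  by rewrite -XY1 leeDr.
have Xfin : X \is a fin_num.
  rewrite ge0_fin_numE // (@le_lt_trans _ _ 1%E) ?ltry //.
  by rewrite -XY1 leeDl.
have sX : s%:E = X by rewrite /s /succ_prob fineK.
move: XY1 X0 Y0; rewrite -sX -(fineK Yfin) -EFinD => /eqP; rewrite eqe => /eqP XY1.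
rewrite !lee_fin => s0 Y0; split => //.
- by apply/andP; split => //; lra.
- by congr (_%:E); lra.
Qed.

Lemma esum_if_mul (kA kB : R) : (0 <= kA)%R -> (0 <= kB)%R ->
  \esum_(o in [set: O]) ((if r o then kA else kB) * pi o)%:E
  = (kA * succ_prob r pi + kB * (1 - succ_prob r pi))%:E.
Proof.
move=> kA0 kB0; have [_ sA sB] := succ_prob_split.
transitivity (\esum_(o in [set: O]) (kA%:E * ((r o)%:R * pi o)%:E +
                                      kB%:E * ((~~ r o)%:R * pi o)%:E))%E.
  apply: eq_esum => o _; rewrite -!EFinM -EFinD.
  by case: (r o) => /=; congr (_%:E); ring.
rewrite esumD; last 2 first.
- by move=> o _; rewrite mule_ge0 ?indicator_mul_ge0.
- by move=> o _; rewrite mule_ge0 ?indicator_mul_ge0.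
rewrite !ge0_esumZl //; try by move=> o; exact: indicator_mul_ge0.
by rewrite sA sB -!EFinM -EFinD.
Qed.

End Distributions.

Section Gibbs.
Context {R : realType}.

Lemma ln_le_subr1 (u : R) : 0 < u -> ln u <= u - 1.
Proof. by move=> u0; have := expR_ge1Dx (ln u); rewrite lnK ?posrE //; lra. Qed.

Lemma ln_eq_subr1 (u : R) : 0 < u -> ln u = u - 1 -> u = 1.
Proof.
move=> u0 lnu; apply/eqP; rewrite -ln_eq0 //; apply/negPn/negP => /expR_gt1Dx.
by rewrite lnK ?posrE //; lra.
Qed.

Lemma xlnxy_sub_tangent (a b l : R) : 0 < a -> 0 < b -> 0 < l ->
  a * ln (a / b) - ((1 + ln l) * a - l * b)
  = a * (l * b / a - 1 - ln (l * b / a)).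
Proof.
move=> a0 b0 l0; set u := l * b / a.
have u0 : 0 < u by rewrite divr_gt0 ?mulr_gt0.
have -> : a / b = l / u by rewrite /u; field; rewrite ?gt_eqF // mulr_gt0.
have lbE : l * b = a * u by rewrite /u; field; rewrite gt_eqF.
by rewrite ln_div ?posrE // lbE; ring.
Qed.

Local Open Scope ereal_scope.

Lemma kl_term_ge_tangent (a b l : R) : (0 <= a)%R -> (0 <= b)%R -> (0 < l)%R ->
  ((1 + ln l) * a - l * b)%:E <= kl_term a b.
Proof.
move=> a0 b0 l0; rewrite /kl_term.
have [->|an0] := eqVneq a 0%R.
  by rewrite mulr0 add0r lee_fin oppr_le0 mulr_ge0 // ltW.
have [->|bn0] := eqVneq b 0%R; first by rewrite leey.
have a0' : (0 < a)%R by rewrite lt_neqAle eq_sym an0.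
have b0' : (0 < b)%R by rewrite lt_neqAle eq_sym bn0.
have := xlnxy_sub_tangent _ _ _ a0' b0' l0; set u := (l * b / a)%R => gapE.
have u0 : (0 < u)%R by rewrite divr_gt0 ?mulr_gt0.
by rewrite lee_fin -subr_ge0 gapE mulr_ge0 ?(ltW a0') // subr_ge0 ln_le_subr1.
Qed.

Lemma kl_term_eq_tangent (a b l : R) : (0 <= a)%R -> (0 <= b)%R -> (0 < l)%R ->
  kl_term a b = ((1 + ln l) * a - l * b)%:E -> a = (l * b)%R.
Proof.
move=> a0 b0 l0; rewrite /kl_term.
have [->|an0] := eqVneq a 0%R.
  move=> /eqP; rewrite eqe mulr0 add0r eq_sym oppr_eq0 mulf_eq0 gt_eqF //=.
  by move=> /eqP ->; rewrite mulr0.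
have [->|bn0] := eqVneq b 0%R; first by [].
have a0' : (0 < a)%R by rewrite lt_neqAle eq_sym an0.
have b0' : (0 < b)%R by rewrite lt_neqAle eq_sym bn0.
move=> /eqP; rewrite eqe -subr_eq0 xlnxy_sub_tangent //.
rewrite mulf_eq0 gt_eqF //= subr_eq0 eq_sym => /eqP lnu.
have u1 := ln_eq_subr1 _ (divr_gt0 (mulr_gt0 l0 b0') a0') lnu.
by move: u1 => /(congr1 ( *%R^~ a)); rewrite divfK ?gt_eqF // mul1r => ->.
Qed.

Lemma kl_term_tilt (b l : R) : (0 <= b)%R -> (0 < l)%R ->
  kl_term (l * b) b = ((1 + ln l) * (l * b) - l * b)%:E.
Proof.
move=> b0 l0; rewrite /kl_term.
have [->|bn0] := eqVneq b 0%R; first by rewrite mulr0 eqxx mulr0 subrr.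
rewrite mulf_eq0 (negbTE bn0) gt_eqF //= (mulfK bn0).
by congr (_%:E); ring.
Qed.

Lemma kl_term_pinfty_or_fin (a b : R) :
  kl_term a b = +oo \/ kl_term a b \is a fin_num.
Proof. by rewrite /kl_term; case: ifP => _; [right|case: ifP => _; [left|right]]. Qed.

End Gibbs.

Lemma maxr0_sub_maxNr0 {R : realDomainType} (t : R) :
  Num.max t 0 - Num.max (- t) 0 = t.
Proof.
have [t0|t0] := boolP (0 <= t).
  by rewrite (max_idPl t0) (max_idPr _) ?subr0 // oppr_le0.
rewrite -ltNge in t0.
by rewrite (max_idPr (ltW t0)) (max_idPl _) ?opprK ?add0r // oppr_ge0 ltW.
Qed.

Lemma ge0_balance_sube {R : realType} {S G : \bar R} {n a1 a2 a3 : R} :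
  (0 <= S)%E -> (0 <= G)%E ->
  (S + a1%:E + a2%:E = n%:E + G + a3%:E)%E -> (S - n%:E = G + (a3 - a1 - a2)%:E)%E.
Proof.
case: S => [s||] //; case: G => [g||] //= _ _.
by move=> /eqP; rewrite -!EFinD eqe => /eqP e; congr (_%:E); lra.
Qed.

Section KLDecomposition.
Context {R : realType} {O : countType}.
Local Open Scope ereal_scope.

Lemma KL_neg_part_fin (pi piref : O -> R) : is_dist pi -> is_dist piref ->
  \esum_(o in [set: O]) maxe (- kl_term (pi o) (piref o)) 0 \is a fin_num.
Proof.
move=> [pi0 _] [piref0 piref1]; rewrite ge0_fin_numE; last first.
  by apply: esum_ge0 => o _; rewrite le_max lexx orbT.
apply: (le_lt_trans _ (ltry 1%R)); rewrite -piref1; apply: le_esum => o _.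
rewrite ge_max lee_fin piref0 andbT leeNl.
have := kl_term_ge_tangent _ _ _ (pi0 o) (piref0 o) ltr01.
rewrite ln1 addr0 !mul1r; apply: le_trans.
by rewrite -EFinN lee_fin; have := pi0 o; lra.
Qed.

Variables (r : O -> bool) (lA lB : R).
Hypotheses (lA0 : (0 < lA)%R) (lB0 : (0 < lB)%R).

Definition tilt_weight (o : O) : R := if r o then lA else lB.

Definition kl_tangent (pi piref : O -> R) (o : O) : R :=
  ((1 + ln (tilt_weight o)) * pi o - tilt_weight o * piref o)%R.

Definition kl_gap (pi piref : O -> R) (o : O) : \bar R :=
  kl_term (pi o) (piref o) - (kl_tangent pi piref o)%:E.

Lemma tilt_weight_gt0 (o : O) : (0 < tilt_weight o)%R.
Proof. by rewrite /tilt_weight; case: (r o). Qed.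

Lemma kl_gap_ge0 (pi piref : O -> R) (o : O) :
  (0 <= pi o)%R -> (0 <= piref o)%R -> 0 <= kl_gap pi piref o.
Proof.
move=> pi0 piref0; rewrite /kl_gap sube_ge0 ?fin_numE //.
exact: kl_term_ge_tangent _ _ _ pi0 piref0 (tilt_weight_gt0 o).
Qed.

Let pos_coef (o : O) : R := Num.max (1 + ln (tilt_weight o))%R 0%R.
Let neg_coef (o : O) : R := Num.max (- (1 + ln (tilt_weight o)))%R 0%R.

(* The tangent term may be negative, so its positive and negative parts are
   moved to opposite sides to keep every summand nonnegative. *)
Let kl_parts_balance (pi piref : O -> R) (o : O) :
  maxe (kl_term (pi o) (piref o)) 0 + (neg_coef o * pi o)%:E
    + (tilt_weight o * piref o)%:E
  = maxe (- kl_term (pi o) (piref o)) 0 + kl_gap pi piref o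
    + (pos_coef o * pi o)%:E.
Proof.
rewrite /kl_gap /kl_tangent.
case: (kl_term_pinfty_or_fin (pi o) (piref o)) => [->|].
  by rewrite (max_idPl (leey _)) (max_idPr (leNye _)).
move=> /fineK <-; set y := fine _.
rewrite -EFinN -!EFin_max -!EFinB -!EFinD; congr (_%:E).
have hy := maxr0_sub_maxNr0 y.
have hw := maxr0_sub_maxNr0 (1 + ln (tilt_weight o))%R.
have : (pos_coef o * pi o - neg_coef o * pi o
        = (1 + ln (tilt_weight o)) * pi o)%R by rewrite -mulrBl hw.
by rewrite /pos_coef /neg_coef; lra.
Qed.

Let esum_weight_mul (f : R -> R) (pi : O -> R) : is_dist pi ->
  (0 <= f lA)%R -> (0 <= f lB)%R ->
  \esum_(o in [set: O]) (f (tilt_weight o) * pi o)%:E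
  = (f lA * succ_prob r pi + f lB * (1 - succ_prob r pi))%:E.
Proof.
move=> dpi fA fB; rewrite -esum_if_mul //.
by apply: eq_esum => o _; rewrite /tilt_weight; case: (r o).
Qed.

Lemma KL_tangent_decomposition (pi piref : O -> R) : is_dist pi -> is_dist piref ->
  KL pi piref = \esum_(o in [set: O]) kl_gap pi piref o +
    ((1 + ln lA) * succ_prob r pi + (1 + ln lB) * (1 - succ_prob r pi)
     - (lA * succ_prob r piref + lB * (1 - succ_prob r piref)))%:E.
Proof.
move=> dpi dref; have [pi0 _] := dpi; have [ref0 _] := dref.
have max0 (x : \bar R) : 0 <= maxe x 0 by rewrite le_max lexx orbT.
have maxr0 (x : R) : (0 <= Num.max x 0)%R by rewrite le_max lexx orbT.
have coef0 (c : R) o : (0 <= c)%R -> 0 <= (c * pi o)%:E.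
  by move=> c0; rewrite lee_fin mulr_ge0.
have gap0 o : 0 <= kl_gap pi piref o by exact: kl_gap_ge0.
have E := eq_esum (I := [set: O]) (fun o _ => kl_parts_balance pi piref o).
rewrite esumD in E; last 2 first.
- by move=> o _; apply: adde_ge0; [exact: max0|exact: coef0 (maxr0 _)].
- by move=> o _; rewrite lee_fin mulr_ge0 ?ref0 ?ltW ?tilt_weight_gt0.
rewrite esumD in E; [|by move=> o _; exact: max0|by move=> o _; exact: coef0 (maxr0 _)].
rewrite esumD in E; last 2 first.
- by move=> o _; apply: adde_ge0; [exact: max0|exact: gap0].
- by move=> o _; exact: coef0 (maxr0 _).
rewrite esumD in E; [|by move=> o _; exact: max0|by move=> o _; exact: gap0].
rewrite /pos_coef /neg_coef in E.
rewrite (esum_weight_mul (fun w => Num.max (- (1 + ln w)) 0)%R) // in E.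
rewrite (esum_weight_mul (fun w => Num.max (1 + ln w) 0)%R) // in E.
rewrite (esum_weight_mul id) ?ltW // in E.
rewrite /KL -(fineK (KL_neg_part_fin _ _ dpi dref)) in E *.
rewrite (ge0_balance_sube (esum_ge0 (fun o _ => max0 _))
                          (esum_ge0 (fun o _ => gap0 o)) E).
congr (_ + _%:E).
have hA := maxr0_sub_maxNr0 (1 + ln lA)%R.
have hB := maxr0_sub_maxNr0 (1 + ln lB)%R.
rewrite -[in RHS]hA -[in RHS]hB; ring.
Qed.

End KLDecomposition.

Section Maximizer.
Context {R : realType} {O : countType}.
Variables (rp rm beta eps : R) (r : O -> bool) (piref piprev : O -> R).
Hypotheses (beta_gt0 : 0 < beta) (dist_ref : is_dist piref).
Hypothesis ref_succ01 : 0 < succ_prob r piref < 1.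

Let P := succ_prob r piref.
Let pp := succ_prob r piprev.
Let mu := noisy_mean rp rm pp.
Let c := (1 - rp - rm) / Num.sqrt (mu * (1 - mu) + eps).
Let Z := P * expR (c / beta) + (1 - P).
Let lA := expR (c / beta) / Z.
Let lB := 1 / Z.
Let tilted (o : O) : R := tilt_weight r lA lB o * piref o.

Let Z_gt0 : 0 < Z.
Proof.
by case/andP: ref_succ01 => P0 P1; rewrite addr_gt0 ?mulr_gt0 ?expR_gt0 ?subr_gt0.
Qed.

Let lA_gt0 : 0 < lA. Proof. by rewrite divr_gt0 ?expR_gt0. Qed.
Let lB_gt0 : 0 < lB. Proof. by rewrite divr_gt0. Qed.

Let weights_normalized : lA * P + lB * (1 - P) = 1.
Proof. by rewrite /lA /lB; move: Z_gt0; rewrite /Z => Z0; field; rewrite gt_eqF. Qed.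

Let tilted_dist : is_dist tilted.
Proof.
have [ref0 _] := dist_ref; split.
  by move=> o; rewrite /tilted /tilt_weight mulr_ge0 //; case: (r o); exact: ltW.
by rewrite /tilted /tilt_weight esum_if_mul ?ltW // weights_normalized.
Qed.

Let succ_prob_tilted : succ_prob r tilted = lA * P.
Proof.
rewrite /succ_prob (eq_esum (b := fun o => ((if r o then lA else 0) * piref o)%:E)).
  by rewrite esum_if_mul ?lexx ?ltW // mul0r addr0.
by move=> o _; rewrite /tilted /tilt_weight; case: (r o); rewrite ?mul1r ?mul0r.
Qed.

Local Open Scope ereal_scope.

Let objective_gap (pi : O -> R) : is_dist pi ->
  objective rp rm beta eps r piref piprev pi
  = (beta * ln Z - c * pp)%:E
    - beta%:E * \esum_(o in [set: O]) kl_gap r lA lB pi piref o.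
Proof.
move=> dpi; rewrite /objective -/pp -/mu.
have -> : ((1 - rp - rm) * (succ_prob r pi - pp) / Num.sqrt (mu * (1 - mu) + eps)
          = c * (succ_prob r pi - pp))%R by rewrite /c; ring.
rewrite (KL_tangent_decomposition r _ _ lA_gt0 lB_gt0 _ _ dpi dist_ref).
have G0 : 0 <= \esum_(o in [set: O]) kl_gap r lA lB pi piref o.
  by apply: esum_ge0 => o _; apply: kl_gap_ge0; case: dpi; case: dist_ref.
have lnA : ln lA = (c / beta - ln Z)%R by rewrite /lA ln_div ?posrE ?expR_gt0 // expRK.
have lnB : ln lB = (- ln Z)%R by rewrite /lB ln_div ?posrE // ln1 sub0r.
move: G0; set G := esum _ _; case: G => [g||] //= _.
  rewrite -!EFinD; congr (_%:E).
  rewrite -/P weights_normalized lnA lnB; field.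
  by rewrite gt_eqF.
by rewrite addye // (muleC _ +oo) gt0_mulye ?lte_fin // /= !addeNy.
Qed.

Let esum_kl_gap_tilted :
  \esum_(o in [set: O]) kl_gap r lA lB tilted piref o = 0.
Proof.
have [ref0 _] := dist_ref; apply: esum1 => o _.
rewrite /kl_gap /kl_tangent /tilted kl_term_tilt ?subee //.
by rewrite /tilt_weight; case: (r o).
Qed.

Let maximizer_gap_eq0 (pik : O -> R) :
  is_maximizer rp rm beta eps r piref piprev pik ->
  \esum_(o in [set: O]) kl_gap r lA lB pik piref o = 0.
Proof.
move=> [dk maxk]; have := maxk _ tilted_dist.
rewrite !objective_gap // esum_kl_gap_tilted mule0 sube0.
have : 0 <= \esum_(o in [set: O]) kl_gap r lA lB pik piref o.
  by apply: esum_ge0 => o _; apply: kl_gap_ge0; case: dk; case: dist_ref.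
case: (esum _ _) => [g||] //=.
  rewrite -EFinD !lee_fin => g0 le_g; congr (_%:E); apply/eqP.
  by rewrite eq_le g0 andbT -(pmulr_rle0 _ beta_gt0); lra.
by rewrite (muleC _ +oo) gt0_mulye ?lte_fin // /= addeNy leeNy_eq.
Qed.

Let maximizer_tilted (pik : O -> R) :
  is_maximizer rp rm beta eps r piref piprev pik -> pik = tilted.
Proof.
move=> maxk; have [[k0 _] _] := maxk; have [ref0 _] := dist_ref.
apply/funext => o; apply: (kl_term_eq_tangent _ _ _ (k0 o) (ref0 o)).
  by rewrite /tilt_weight; case: (r o).
have gap0 : kl_gap r lA lB pik piref o = 0.
  apply/eqP; rewrite eq_le kl_gap_ge0 // andbT -(maximizer_gap_eq0 _ maxk).
  by apply: ge0_term_le_esum => o'; apply: kl_gap_ge0.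
move: gap0; rewrite /kl_gap /kl_tangent.
case: (kl_term_pinfty_or_fin (pik o) (piref o)) => [->//|/fineK <-].
by rewrite -EFinB => /eqP; rewrite eqe subr_eq0 => /eqP ->.
Qed.

Lemma succ_prob_maximizer (pik : O -> R) :
  is_maximizer rp rm beta eps r piref piprev pik ->
  succ_prob r pik = htilde P rp rm beta eps pp.
Proof.
move=> /maximizer_tilted ->; rewrite succ_prob_tilted /htilde -/mu.
set S := Num.sqrt _.
have -> : ((1 - rp - rm) / (beta * S) = c / beta)%R.
  rewrite /c -/S; have [->|S0] := eqVneq S 0%R.
    by rewrite mulr0 !invr0 !mulr0 mul0r.
  by field; rewrite S0 gt_eqF.
rewrite expRN /lA; move: Z_gt0 (expR_gt0 (c / beta)); rewrite /Z.
case/andP: ref_succ01 => P0 P1; set e := expR _ => Z0 e0.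
by field; rewrite !gt_eqF.
Qed.

End Maximizer.

Section FixedPoints.
Context {R : realType}.

Definition continuous01 (f : R -> R) :=
  forall x, 0 <= x <= 1 -> {for x, continuous f}.

Lemma fixed_point_between (f : R -> R) (a b : R) : continuous01 f ->
  0 <= a -> a <= b -> b <= 1 -> a <= f a -> f b <= b ->
  exists2 c, a <= c <= b & f c = c.
Proof.
move=> cf a0 ab b1 fa fb.
have cfB : {within `[a, b], continuous (fun x => f x - x)}.
  apply: continuous_in_subspaceT => x; rewrite inE /= in_itv /= => /andP[ax xb].
  by apply: continuousB; [apply: cf; apply/andP; split; lra|exact: cvg_id].
have [|c] := IVT (v := 0) ab cfB.
  by rewrite ge_min le_max; apply/andP; split; apply/orP; [right|left]; lra.
by rewrite in_itv /= => cab /eqP; rewrite subr_eq0 => /eqP fc; exists c.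
Qed.

Lemma largest_fixed_point_exists (f : R -> R) : continuous01 f ->
  (forall x, 0 <= x <= 1 -> 0 <= f x <= 1) -> exists a, largest_fixed_point f a.
Proof.
move=> cf f01; set S := [set x : R | 0 <= x <= 1 /\ f x = x].
have /andP[f0 _] : 0 <= f 0 <= 1 by apply: f01; rewrite lexx ler01.
have /andP[_ f1] : 0 <= f 1 <= 1 by apply: f01; rewrite lexx ler01.
have [c c01 fc] := fixed_point_between _ _ _ cf (lexx 0) ler01 (lexx 1) f0 f1.
have S_ub1 : ubound S 1 by move=> x [/andP[_ ?] _].
have supS : has_sup S by split; [exists c|exists 1].
set a := sup S.
have le_a x : S x -> x <= a by move=> Sx; exact: sup_upper_bound.
have a0 : 0 <= a by apply: le_trans (le_a c (conj c01 fc)); case/andP: c01.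
have a1 : a <= 1 by apply: ge_sup => //; exists c.
have not_lt : ~ f a < a.
  move=> lt_fa; have neg_fa : f a - a < 0 by lra.
  have cfB : (fun x => f x - x) @ a --> f a - a.
    by apply: continuousB; [apply: cf; rewrite a0 a1|exact: cvg_id].
  have [e e0 near_neg] := (nbhs_ballP _ _).1 (cvgr_lt _ cfB _ neg_fa).
  have [s Ss lt_s] := sup_adherent e0 supS.
  have : ball a e s.
    rewrite /ball /= ger0_norm ?subr_ge0 ?le_a //.
    by move: lt_s; rewrite !ltrBlDr addrC.
  by move/near_neg => /=; case: Ss => _ ->; lra.
have not_gt : ~ a < f a.
  move=> gt_fa; have a_lt1 : a < 1.
    by rewrite lt_neqAle a1 andbT; apply/eqP => a_eq1; move: gt_fa; rewrite a_eq1; lra.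
  have [c' /andP[ac' c'1] fc'] :=
    fixed_point_between _ _ _ cf a0 (ltW a_lt1) (lexx 1) (ltW gt_fa) f1.
  have c'a : c' = a.
    by apply/eqP; rewrite eq_le ac' le_a //; split => //; rewrite c'1 (le_trans a0 ac').
  by move: gt_fa; rewrite -c'a fc' ltxx.
exists a; split; first by rewrite a0 a1.
- by have [//|//|] := ltgtP (f a) a.
- by move=> x x01 fx; apply: le_a.
Qed.

Lemma largest_fixed_point_lt (f g : R -> R) (a b : R) : continuous01 g -> g 1 <= 1 ->
  (forall x, 0 <= x <= 1 -> f x < g x) ->
  largest_fixed_point f a -> largest_fixed_point g b -> a < b.
Proof.
move=> cg g1 lt_fg [/andP[a0 a1] fa _] [_ _ le_b].
have lt_ga : a < g a by rewrite -{1}fa; apply: lt_fg; rewrite a0 a1.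
have [c /andP[ac c1] gc] := fixed_point_between _ _ _ cg a0 a1 (lexx 1) (ltW lt_ga) g1.
have cb : c <= b by apply: le_b => //; rewrite c1 (le_trans a0 ac).
apply: lt_le_trans cb; rewrite lt_neqAle ac andbT; apply/eqP => ac'.
by move: lt_ga; rewrite ac' gc ltxx.
Qed.

End FixedPoints.

Section Logistic.
Context {R : realType}.

Definition logistic (K t : R) : R := 1 / (1 + K * expR (- t)).

Lemma logistic_in01 (K t : R) : 0 < K -> 0 < logistic K t < 1.
Proof.
move=> K0; have gt1 : 1 < 1 + K * expR (- t) by rewrite ltrDl mulr_gt0 ?expR_gt0.
apply/andP; split; first by rewrite divr_gt0 // (lt_trans ltr01).
by rewrite ltr_pdivrMr ?mul1r // (lt_trans ltr01).
Qed.

Lemma ltr_logistic (K t1 t2 : R) : 0 < K -> t1 < t2 ->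
  logistic K t1 < logistic K t2.
Proof.
move=> K0 t12.
have D2 : 0 < 1 + K * expR (- t2) by rewrite addr_gt0 ?mulr_gt0 ?expR_gt0.
have D12 : 1 + K * expR (- t2) < 1 + K * expR (- t1).
  by rewrite ltrD2l ltr_pM2l // ltr_expR ltrN2.
by rewrite /logistic !div1r ltf_pV2 ?posrE // (lt_trans D2).
Qed.

Lemma logistic_continuous (K : R) (g : R -> R) (x : R) : 0 <= K ->
  {for x, continuous g} -> {for x, continuous (fun p => logistic K (g p))}.
Proof.
move=> K0 cg; apply: continuousM; first exact: cvg_cst.
apply: continuousV.
  by rewrite gt_eqF // (lt_le_trans ltr01) // lerDl mulr_ge0 // ltW // expR_gt0.
apply: continuousD; first exact: cvg_cst.
apply: continuousM; first exact: cvg_cst.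
apply: (continuous_comp (f := fun p => - g p)); first exact: continuousN.
exact: continuous_expR.
Qed.

Lemma div_sqrt_continuous (a beta : R) (q : R -> R) (x : R) :
  0 < beta -> 0 < q x -> {for x, continuous q} ->
  {for x, continuous (fun p => a / (beta * Num.sqrt (q p)))}.
Proof.
move=> beta0 qx0 cq; apply: continuousM; first exact: cvg_cst.
apply: continuousV; first by rewrite mulf_eq0 negb_or !gt_eqF ?sqrtr_gt0.
apply: continuousM; first exact: cvg_cst.
exact: (continuous_comp cq (@sqrt_continuous R _)).
Qed.

End Logistic.

Lemma noisy_variance_ge {R : realType} (rp rm p : R) :
  0 <= rp -> 0 <= rm -> 0 <= 1 - rp - rm -> 0 <= p <= 1 ->
  (1 - rp - rm) ^+ 2 * (p * (1 - p))
  <= noisy_mean rp rm p * (1 - noisy_mean rp rm p).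
Proof.
move=> rp0 rm0 a0 /andP[p0 p1]; rewrite /noisy_mean; set a := 1 - rp - rm.
have -> : (rp + a * p) * (1 - (rp + a * p))
          = a ^+ 2 * (p * (1 - p)) + (rp * rm + rp * (a * (1 - p)) + a * p * rm).
  by rewrite /a; ring.
have p1' : 0 <= 1 - p by rewrite subr_ge0.
by rewrite lerDl !addr_ge0 ?mulr_ge0.
Qed.

Section NoisyMap.
Context {R : realType}.
Variables (P rp rm beta eps : R).
Hypotheses (beta_gt0 : 0 < beta) (eps_gt0 : 0 < eps).
Hypotheses (rp01 : 0 <= rp <= 1) (rm01 : 0 <= rm <= 1) (gap_gt0 : 0 < 1 - rp - rm).
Hypothesis P01 : 0 < P < 1.

Let F (p : R) : R := noisy_mean rp rm p.
Let K : R := (1 - P) / P.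

Let K_gt0 : 0 < K.
Proof. by case/andP: P01 => P0 P1; rewrite divr_gt0 // subr_gt0. Qed.

Let htildeE (p : R) : htilde P rp rm beta eps p
  = logistic K ((1 - rp - rm) / (beta * Num.sqrt (F p * (1 - F p) + eps))).
Proof. by []. Qed.

Let hmapE (p : R) : hmap P beta eps p
  = logistic K (1 / (beta * Num.sqrt (p * (1 - p) + eps))).
Proof. by []. Qed.

Let variance_ge0 (p : R) : 0 <= p <= 1 -> 0 <= p * (1 - p).
Proof. by case/andP=> p0 p1; rewrite mulr_ge0 ?subr_ge0. Qed.

Let variance_le_noisy (p : R) : 0 <= p <= 1 ->
  (1 - rp - rm) ^+ 2 * (p * (1 - p)) <= F p * (1 - F p).
Proof.
case/andP: rp01 => rp0 _; case/andP: rm01 => rm0 _.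
exact: noisy_variance_ge _ _ _ rp0 rm0 (ltW gap_gt0).
Qed.

Let noisy_variance_ge0 (p : R) : 0 <= p <= 1 -> 0 <= F p * (1 - F p).
Proof.
move=> p01; rewrite (le_trans _ (variance_le_noisy _ p01)) //.
by rewrite mulr_ge0 ?sqr_ge0 ?variance_ge0.
Qed.

(* Noise scales the reward gap by [1 - rp - rm] < 1 but shrinks the standard
   deviation by at most that factor, and [eps] is not shrunk at all. *)
Lemma noisy_exponent_lt (p : R) : 0 < rp + rm -> 0 <= p <= 1 ->
  (1 - rp - rm) / (beta * Num.sqrt (F p * (1 - F p) + eps))
  < 1 / (beta * Num.sqrt (p * (1 - p) + eps)).
Proof.
move=> noise p01; set a := 1 - rp - rm.
set u := Num.sqrt (p * (1 - p) + eps); set v := Num.sqrt (F p * (1 - F p) + eps).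
have u0 : 0 < u by rewrite sqrtr_gt0 ltr_wpDl ?variance_ge0.
have v0 : 0 < v by rewrite sqrtr_gt0 ltr_wpDl ?noisy_variance_ge0.
have u2 : u ^+ 2 = p * (1 - p) + eps.
  by rewrite sqr_sqrtr // addr_ge0 ?variance_ge0 // ltW.
have v2 : v ^+ 2 = F p * (1 - F p) + eps.
  by rewrite sqr_sqrtr // addr_ge0 ?noisy_variance_ge0 // ltW.
have a_lt1 : a < 1 by rewrite /a; lra.
have var_ge := variance_le_noisy _ p01.
have au_lt_v : a * u < v.
  have : (a * u) ^+ 2 < v ^+ 2.
    have a2_lt1 : a ^+ 2 < 1 by rewrite expr_lt1 ?ltW.
    rewrite exprMn u2 v2 mulrDr; apply: ler_ltD => //.
    by rewrite gtr_pMl.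
  by rewrite ltr_pXn2r // !nnegrE ?mulr_ge0 ?ltW.
rewrite -subr_gt0 (_ : 1 / (beta * u) - a / (beta * v) = (v - a * u) / (beta * u * v)).
  by rewrite divr_gt0 ?subr_gt0 // !mulr_gt0.
by field; rewrite !gt_eqF.
Qed.

Lemma htilde_lt_hmap (p : R) : 0 < rp + rm -> 0 <= p <= 1 ->
  htilde P rp rm beta eps p < hmap P beta eps p.
Proof.
by move=> noise p01; rewrite htildeE hmapE ltr_logistic // noisy_exponent_lt.
Qed.

Lemma htilde_continuous01 : continuous01 (htilde P rp rm beta eps).
Proof.
move=> x x01; apply: logistic_continuous; first exact: ltW.
apply: div_sqrt_continuous => //; first by rewrite ltr_wpDl ?noisy_variance_ge0.
have cF : {for x, continuous F}.
  apply: continuousD; first exact: cvg_cst.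
  by apply: continuousM; [exact: cvg_cst|exact: cvg_id].
apply: continuousD; last exact: cvg_cst.
by apply: continuousM => //; apply: continuousB; [exact: cvg_cst|].
Qed.

Lemma hmap_continuous01 : continuous01 (hmap P beta eps).
Proof.
move=> x x01; apply: logistic_continuous; first exact: ltW.
apply: div_sqrt_continuous => //; first by rewrite ltr_wpDl ?variance_ge0.
apply: continuousD; last exact: cvg_cst.
apply: continuousM; first exact: cvg_id.
by apply: continuousB; [exact: cvg_cst|exact: cvg_id].
Qed.

Lemma largest_fixed_point_htilde_lt_hmap : 0 < rp + rm ->
  exists a b : R,
    [/\ largest_fixed_point (htilde P rp rm beta eps) a,
        largest_fixed_point (hmap P beta eps) b & a < b].
Proof.
move=> noise.
have in01 (f : R -> R) :
    (forall x, 0 < f x < 1) -> forall x, 0 <= x <= 1 -> 0 <= f x <= 1.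
  by move=> f01 x _; case/andP: (f01 x) => f0 f1; rewrite !ltW.
have [a lfp_a] := largest_fixed_point_exists _ htilde_continuous01
  (in01 _ (fun p => logistic_in01 _ _ K_gt0)).
have [b lfp_b] := largest_fixed_point_exists _ hmap_continuous01
  (in01 _ (fun p => logistic_in01 _ _ K_gt0)).
exists a, b; split => //.
apply: (largest_fixed_point_lt _ _ _ _ hmap_continuous01 _ _ lfp_a lfp_b).
- by have /andP[_ /ltW] : 0 < hmap P beta eps 1 < 1 := logistic_in01 _ _ K_gt0.
- by move=> x; exact: htilde_lt_hmap.
Qed.

End NoisyMap.

Theorem theorem4 (R : realType) (O : countType) (r : O -> bool)
    (piref : O -> R) (rp rm beta eps : R) (pi : nat -> O -> R) :
  0 < beta -> 0 < eps ->
  0 <= rp <= 1 -> 0 <= rm <= 1 -> 0 < 1 - rp - rm ->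
  is_dist piref ->
  0 < succ_prob r piref < 1 ->
  is_dist (pi 0%N) ->
  (forall k : nat, is_maximizer rp rm beta eps r piref (pi k) (pi k.+1)) ->
  (forall k : nat,
     succ_prob r (pi k.+1)
     = htilde (succ_prob r piref) rp rm beta eps (succ_prob r (pi k))) /\
  (0 < rp + rm ->
     (forall p : R, 0 <= p <= 1 ->
        htilde (succ_prob r piref) rp rm beta eps p
        < hmap (succ_prob r piref) beta eps p) /\
     exists a b : R,
       [/\ largest_fixed_point (htilde (succ_prob r piref) rp rm beta eps) a,
           largest_fixed_point (hmap (succ_prob r piref) beta eps) b
         & a < b]).
Proof.
move=> beta0 eps0 rp01 rm01 gap0 dist_ref ref01 _ maximizers; split.
  by move=> k; exact: succ_prob_maximizer (maximizers k).
move=> noise; split.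
  by move=> p; exact: htilde_lt_hmap.
exact: largest_fixed_point_htilde_lt_hmap.
Qed.
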